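(* Let $n\ge \max\{m,p\}$, $A\in\mathbb{R}^{n\times n}$ symmetric positive definite, $B\in\mathbb{R}^{m\times n}$ of full row rank, $D\in\mathbb{R}^{m\times m}$ symmetric positive semidefinite, and $\widehat A\in\mathbb{R}^{n\times n}$, $\widehat S\in\mathbb{R}^{m\times m}$ symmetric positive definite. Set $\overline A=\widehat A^{-1/2}A\widehat A^{-1/2}$, $\overline D=\widehat S^{-1/2}D\widehat S^{-1/2}$, $R=\widehat S^{-1/2}B\widehat A^{-1/2}$, $\widetilde S=D+B\widehat A^{-1}B^T$, and define $\gamma^A_{\min/\max}=\lambda_{\min/\max}(\widehat A^{-1}A)$, $\gamma^S_{\max}=\lambda_{\max}(\widehat S^{-1}\widetilde S)$, $\gamma^D_{\max}=\lambda_{\max}(\widehat S^{-1}D)$, $\gamma^R_{\min}=\lambda_{\min}(RR^T)$. Assume $1\in[\gamma^A_{\min},\gamma^A_{\max}]$. Let $\zeta\in\mathbb{R}$ satisfy either $$0<\zeta<\min\left\{\gamma^A_{\min},\ \frac{\gamma^R_{\min}}{\gamma^A_{\max}+\gamma^R_{\min}+\gamma^D_{\max}}\right\}\quad\text{or}\quad \zeta\ge\gamma^A_{\max}+\gamma^S_{\max}.$$ Then all eigenvalues of the symmetric matrix $$Z(\zeta)=(1-\zeta)R(\zeta I-\overline A)^{-1}R^T-\overline D+\zeta I\in\mathbb{R}^{m\times m}$$ are either all positive or all negative.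
   Context: $\lambda_{\min}$, $\lambda_{\max}$ denote the smallest and largest eigenvalues (all matrices involved have real spectra). The assumption $1\in[\gamma^A_{\min},\gamma^A_{\max}]$ is a standing assumption of the paper's analysis. *)

From mathcomp Require Import all_boot all_order all_algebra.
From mathcomp Require Import reals.
Set Implicit Arguments. Unset Strict Implicit. Unset Printing Implicit Defensive.
Import Order.TTheory GRing.Theory Num.Theory.
Local Open Scope ring_scope.

Definition symmx (R : realType) (n : nat) (M : 'M[R]_n) : Prop := M^T = M.

Definition spd (R : realType) (n : nat) (M : 'M[R]_n) : Prop :=
  symmx M /\ forall v : 'rV[R]_n, v != 0 -> 0 < (v *m M *m v^T) 0 0.

Definition spsd (R : realType) (n : nat) (M : 'M[R]_n) : Prop :=
  symmx M /\ forall v : 'rV[R]_n, 0 <= (v *m M *m v^T) 0 0.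

Definition is_lambda_min (R : realType) (n : nat) (M : 'M[R]_n) (g : R) : Prop :=
  eigenvalue M g /\ forall a, eigenvalue M a -> g <= a.

Definition is_lambda_max (R : realType) (n : nat) (M : 'M[R]_n) (g : R) : Prop :=
  eigenvalue M g /\ forall a, eigenvalue M a -> a <= g.

(* Conjugating by the square roots Ahi and Shi turns the generalized eigenvalue
   bounds of the hypotheses into spectral bounds for the symmetric matrices
   Abar, Dbar, R R^T and Dbar + R R^T, hence into Rayleigh-quotient bounds
   (the real spectral theorem, obtained from the complex Hermitian one).
   With W = (zeta I - Abar)^-1 and y = x R, the quadratic form of Z is
   (1 - zeta) y W y^T - x Dbar x^T + zeta |x|^2, and in both ranges of zeta
   the spectrum of W lies below 1 / (zeta - gAmax).  For small zeta we have
   1 - zeta > 0 and |y|^2 >= gRmin |x|^2, which make the form negative; for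
   large zeta we have 1 - zeta < 0 and x Dbar x^T + |y|^2 <= gSmax |x|^2,
   which make it positive.  A definite form has eigenvalues of one sign. *)

From mathcomp Require Import all_boot all_order all_algebra.
From mathcomp Require Import reals complex.
From mathcomp Require Import lra.
Import Order.TTheory GRing.Theory Num.Theory.
Set Implicit Arguments. Unset Strict Implicit. Unset Printing Implicit Defensive.
Local Open Scope ring_scope.

Section Eigenvalue.
Variables (F : fieldType) (k : nat).
Implicit Types (S X : 'M[F]_k) (a c : F).

Lemma eigenvalue_conj_unit S X a :
  S \in unitmx -> eigenvalue (invmx S *m X *m S) a = eigenvalue X a.
Proof.
move=> Su; rewrite -conjVmx //; apply/idP/idP.
- by apply: eigenvalue_conjmx; rewrite ?stablemx_unit ?row_free_unit ?unitmx_inv.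
- rewrite -{1}(conjmxVK X Su).
  by apply: eigenvalue_conjmx; rewrite ?stablemx_unit ?row_free_unit.
Qed.

Lemma eigenvalue_sandwich S X a :
  S \in unitmx -> eigenvalue (S *m X *m S) a = eigenvalue (S *m S *m X) a.
Proof.
move=> Su; rewrite -[RHS](eigenvalue_conj_unit _ _ Su).
by rewrite -!mulmxA mulKmx.
Qed.

Lemma eigenvalue_scalar_subr c X a :
  eigenvalue (c%:M - X) a = eigenvalue X (c - a).
Proof.
apply/eigenvalueP/eigenvalueP => -[v vE vn0]; exists v => //.
- by rewrite scalerBl -vE mulmxBr mul_mx_scalar opprB addrC subrK.
- by rewrite mulmxBr mul_mx_scalar vE scalerBl opprB addrC subrK.
Qed.

Lemma eigenvalue_invmx X a :
  X \in unitmx -> eigenvalue (invmx X) a -> eigenvalue X a^-1.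
Proof.
move=> Xu /eigenvalueP[v vE vn0]; apply/eigenvalueP; exists v => //.
have a_neq0 : a != 0.
  by apply: contraNneq vn0 => a0; rewrite -(mulmxKV Xu v) vE a0 scale0r mul0mx.
have vXE : v = a *: (v *m X) by rewrite scalemxAl -vE mulmxKV.
by rewrite {2}vXE scalerA mulVf ?scale1r.
Qed.

End Eigenvalue.

Section QuadraticForm.
Variable R : realFieldType.
Implicit Types (k l : nat) (a : R).

Definition qform k (M : 'M[R]_k) (v : 'rV[R]_k) : R := (v *m M *m v^T) 0 0.
Definition sqnorm k (v : 'rV[R]_k) : R := (v *m v^T) 0 0.

Lemma qformD k (M N : 'M_k) v : qform (M + N) v = qform M v + qform N v.
Proof. by rewrite /qform mulmxDr mulmxDl mxE. Qed.

Lemma qformN k (M : 'M_k) v : qform (- M) v = - qform M v.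
Proof. by rewrite /qform mulmxN mulNmx mxE. Qed.

Lemma qformZ k a (M : 'M_k) v : qform (a *: M) v = a * qform M v.
Proof. by rewrite /qform -scalemxAr -scalemxAl mxE. Qed.

Lemma qform_scalar k a (v : 'rV_k) : qform a%:M v = a * sqnorm v.
Proof. by rewrite /qform mul_mx_scalar -scalemxAl mxE. Qed.

Lemma qform_mul_tr k l (N : 'M_(k, l)) M v :
  qform (N *m M *m N^T) v = qform M (v *m N).
Proof. by rewrite /qform trmx_mul !mulmxA. Qed.

Lemma qform_mul_trmx k l (N : 'M_(k, l)) v : qform (N *m N^T) v = sqnorm (v *m N).
Proof. by rewrite -[N in N *m _]mulmx1 qform_mul_tr qform_scalar mul1r. Qed.

Lemma sqnormE k (v : 'rV_k) : sqnorm v = \sum_j v 0 j ^+ 2.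
Proof. by rewrite /sqnorm mxE; apply: eq_bigr => j _; rewrite mxE. Qed.

Lemma sqnorm_ge0 k (v : 'rV_k) : 0 <= sqnorm v.
Proof. by rewrite sqnormE sumr_ge0 // => j _; rewrite sqr_ge0. Qed.

Lemma sqnorm_gt0 k (v : 'rV_k) : v != 0 -> 0 < sqnorm v.
Proof.
move=> vn0; have [j vj] : exists j, v 0 j != 0.
  apply/existsP; apply: contraR vn0 => /existsPn vj0.
  by apply/eqP/rowP => j; rewrite mxE; apply/eqP/negbNE.
rewrite sqnormE (bigD1 j) //= ltr_pwDl //; first by rewrite lt_def sqrf_eq0 vj sqr_ge0.
by rewrite sumr_ge0 // => i _; rewrite sqr_ge0.
Qed.

Lemma qform_gram_ge0 k l (N : 'M_(k, l)) v : 0 <= qform (N *m N^T) v.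
Proof. by rewrite qform_mul_trmx sqnorm_ge0. Qed.

Lemma eigenvalue_qform k (M : 'M_k) a :
  eigenvalue M a -> exists2 v, v != 0 & qform M v = a * sqnorm v.
Proof.
by case/eigenvalueP=> v vE vn0; exists v; rewrite // /qform vE -scalemxAl mxE.
Qed.

Lemma psd_eigenvalue_ge0 k (M : 'M_k) a :
  (forall v, 0 <= qform M v) -> eigenvalue M a -> 0 <= a.
Proof.
move=> Mpsd /eigenvalue_qform[v vn0 Mv].
by rewrite -(pmulr_lge0 _ (sqnorm_gt0 vn0)) -Mv.
Qed.

Lemma posdef_eigenvalue_gt0 k (M : 'M_k) a :
  (forall v, v != 0 -> 0 < qform M v) -> eigenvalue M a -> 0 < a.
Proof.
move=> Mpd /eigenvalue_qform[v vn0 Mv].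
by rewrite -(pmulr_lgt0 _ (sqnorm_gt0 vn0)) -Mv Mpd.
Qed.

Lemma negdef_eigenvalue_lt0 k (M : 'M_k) a :
  (forall v, v != 0 -> qform M v < 0) -> eigenvalue M a -> a < 0.
Proof.
move=> Mnd /eigenvalue_qform[v vn0 Mv].
by rewrite -(pmulr_llt0 _ (sqnorm_gt0 vn0)) -Mv Mnd.
Qed.

End QuadraticForm.

Local Open Scope sesquilinear_scope.

(* Hermitian matrices have real spectra, so the hypothesis bounds every eigenvalue. *)
Lemma hermitian_form_le (C : numClosedFieldType) k (H : 'M[C]_k) (g : C) :
  H \is hermsymmx -> {in Num.real, forall a, eigenvalue H a -> a <= g} ->
  forall u : 'rV_k, (u *m H *m u^t*) 0 0 <= g * (u *m u^t*) 0 0.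
Proof.
move=> Hh Hg u; have /orthomx_spectralP HE := hermitian_normalmx Hh.
have Pu := spectral_unit H; have PV := invmx_unitary (spectral_unitarymx H).
move: HE Pu PV; set P := spectralmx H; set d := spectral_diag H => HE Pu PV.
have d_le j : d 0 j <= g.
  apply: Hg; first exact: mxOverP (hermitian_spectral_diag_real Hh) 0 j.
  apply/eigenvalueP; exists (row j P).
    rewrite -row_mul {1}HE !mulmxA mulmxV // mul1mx row_mul row_diag_mx.
    by rewrite -scalemxAl -rowE.
  rewrite rowE mulmx_free_eq0 ?row_free_unit //.
  by apply/negP => /eqP/matrixP/(_ 0 j); rewrite !mxE !eqxx => /eqP; rewrite oner_eq0.
set w := u *m P^t*.
have wE : w^t* = P *m u^t* by rewrite /w trmx_mul map_mxM trmxCK.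
have -> : u *m H *m u^t* = w *m diag_mx d *m w^t*.
  by rewrite wE {1}HE PV /w !mulmxA.
have -> : u *m u^t* = w *m w^t*.
  by rewrite wE /w mulmxA -(mulmxA u) -PV mulVmx // mulmx1.
rewrite mul_mx_diag !mxE mulr_sumr; apply: ler_sum => j _; rewrite !mxE.
by rewrite mulrAC [g * _]mulrC ler_wpM2l ?mul_conjC_ge0.
Qed.

Section Rayleigh.
Variable R : rcfType.
Local Notation toC := (real_complex R).

Lemma map_real_complex_tc k l (X : 'M[R]_(k, l)) : (map_mx toC X)^t* = map_mx toC X^T.
Proof. by apply/matrixP => i j; rewrite !mxE conj_Creal // complex_real. Qed.

Lemma symmx_qform_le k (M : 'M[R]_k) g :
  M^T = M -> (forall a, eigenvalue M a -> a <= g) ->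
  forall v, qform M v <= g * sqnorm v.
Proof.
move=> Msym Mg v.
have Mh : map_mx toC M \is hermsymmx.
  by apply/is_hermitianmxP; rewrite expr0 scale1r map_real_complex_tc Msym.
have MCg : {in Num.real, forall a, eigenvalue (map_mx toC M) a -> a <= toC g}.
  by move=> _ /complex_realP[a ->]; rewrite eigenvalue_map lecR; apply: Mg.
have := hermitian_form_le Mh MCg (map_mx toC v).
have map00 (X : 'M[R]_1) : map_mx toC X 0 0 = toC (X 0 0) by rewrite mxE.
by rewrite map_real_complex_tc -!map_mxM !map00 -rmorphM lecR.
Qed.

Lemma symmx_qform_ge k (M : 'M[R]_k) g :
  M^T = M -> (forall a, eigenvalue M a -> g <= a) ->
  forall v, g * sqnorm v <= qform M v.
Proof.
move=> Msym Mg v; have NME : - M = 0%:M - M by rewrite raddf0 sub0r.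
have NMsym : (- M)^T = - M by rewrite raddfN /= Msym.
have NMg a : eigenvalue (- M) a -> a <= - g.
  by rewrite NME eigenvalue_scalar_subr sub0r => /Mg; rewrite lerNr.
by have := symmx_qform_le NMsym NMg v; rewrite qformN mulNr lerN2.
Qed.

Lemma sqnorm_mul_ge k l (N : 'M[R]_(k, l)) g :
  (forall a, eigenvalue (N *m N^T) a -> g <= a) ->
  forall x, g * sqnorm x <= sqnorm (x *m N).
Proof.
move=> Ng x; rewrite -qform_mul_trmx; apply: symmx_qform_ge Ng x.
by rewrite trmx_mul trmxK.
Qed.

End Rayleigh.

Section Resolvent.
Variables (R : rcfType) (k : nat) (A : 'M[R]_k) (amin amax z : R).
Hypothesis A_sym : A^T = A.
Hypothesis A_spec : forall mu, eigenvalue A mu -> amin <= mu <= amax.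
Hypothesis z_out : z < amin \/ amax < z.

Lemma resolvent_unitmx : z%:M - A \in unitmx.
Proof.
rewrite unitmxE unitfE; apply/negP => /det0P[v vn0 vN].
have : eigenvalue (z%:M - A) 0 by apply/eigenvalueP; exists v; rewrite ?vN ?scale0r.
rewrite eigenvalue_scalar_subr subr0 => /A_spec/andP[lo hi].
by case: z_out; lra.
Qed.

Lemma resolvent_eigenvalue_le a :
  eigenvalue (invmx (z%:M - A)) a -> a <= (z - amax)^-1.
Proof.
move/(eigenvalue_invmx resolvent_unitmx).
rewrite eigenvalue_scalar_subr => /A_spec/andP[lo hi]; rewrite -[a]invrK.
by case: z_out => zb; [rewrite lef_nV2 ?negrE | rewrite lef_pV2 ?posrE]; lra.
Qed.

Lemma resolvent_qform_le v :
  qform (invmx (z%:M - A)) v <= (z - amax)^-1 * sqnorm v.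
Proof.
apply: symmx_qform_le resolvent_eigenvalue_le v.
by rewrite trmx_inv linearB /= tr_scalar_mx A_sym.
Qed.

End Resolvent.

Section ZForm.
Variables (R : rcfType) (n m : nat).
Variables (Ab : 'M[R]_n) (Db : 'M[R]_m) (Rm : 'M[R]_(m, n)) (amin amax z : R).
Hypothesis Ab_sym : Ab^T = Ab.
Hypothesis Ab_spec : forall mu, eigenvalue Ab mu -> amin <= mu <= amax.
Hypothesis Db_psd : forall x, 0 <= qform Db x.

Let Z := (1 - z) *: (Rm *m invmx (z%:M - Ab) *m Rm^T) - Db + z%:M.

Lemma qform_Z x : qform Z x =
  (1 - z) * qform (invmx (z%:M - Ab)) (x *m Rm) - qform Db x + z * sqnorm x.
Proof. by rewrite /Z !qformD qformN qformZ qform_mul_tr qform_scalar. Qed.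

Lemma Z_negdef rmin :
  amin <= 1 <= amax -> 0 < z < amin -> z * (amax + rmin) < rmin ->
  (forall x, rmin * sqnorm x <= sqnorm (x *m Rm)) ->
  forall x, x != 0 -> qform Z x < 0.
Proof.
move=> /andP[amin_le1 amax_ge1] /andP[z_gt0 z_lt] z_rmin Rm_lb x xn0.
have := resolvent_qform_le Ab_sym Ab_spec (or_introl z_lt) (x *m Rm).
have := sqnorm_gt0 xn0; have := Rm_lb x; have := Db_psd x; rewrite qform_Z.
set c := (z - amax)^-1; set w := qform _ (x *m Rm).
set s := sqnorm x; set r := sqnorm (x *m Rm); set d := qform Db x.
move=> d_ge0 r_lb s_gt0 w_le.
have c_lt0 : c < 0 by rewrite invr_lt0; lra.
have cE : c * (z - amax) = 1 by rewrite mulVf //; apply/eqP; lra.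
have w_le' : (1 - z) * w <= (1 - z) * c * (rmin * s).
  rewrite -mulrA; apply: ler_wpM2l; first lra.
  exact: le_trans w_le (ler_wnM2l (ltW c_lt0) r_lb).
have key : 0 < (1 - z) * rmin + z * (z - amax) by nra.
have := mulr_gt0 key s_gt0.
have e : c * (z - amax) * (z * s) = z * s by rewrite cE mul1r.
nra.
Qed.

Lemma Z_posdef smax :
  1 <= amax -> 0 < smax -> amax + smax <= z ->
  (forall x, qform Db x + sqnorm (x *m Rm) <= smax * sqnorm x) ->
  forall x, x != 0 -> 0 < qform Z x.
Proof.
move=> amax_ge1 smax_gt0 z_ge Sb_ub x xn0.
have z_gt : amax < z by lra.
have := resolvent_qform_le Ab_sym Ab_spec (or_intror z_gt) (x *m Rm).
have := sqnorm_gt0 xn0; have := Sb_ub x; have := Db_psd x; rewrite qform_Z.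
set c := (z - amax)^-1; set w := qform _ (x *m Rm).
set s := sqnorm x; set r := sqnorm (x *m Rm); set d := qform Db x.
move=> d_ge0 S_ub s_gt0 w_le.
have c_gt0 : 0 < c by rewrite invr_gt0; lra.
have cE : c * (z - amax) = 1 by rewrite mulVf //; apply/eqP; lra.
have w_ge : (1 - z) * c * r <= (1 - z) * w.
  by rewrite -mulrA; apply: ler_wnM2l w_le; lra.
have key : 0 < (1 - z) * r - (z - amax) * d + z * (z - amax) * s.
  have h1 : 0 <= (amax - 1) * d by apply: mulr_ge0; lra.
  have h2 : 0 <= (z - 1) * (smax * s - d - r) by apply: mulr_ge0; lra.
  have h3 : 0 <= (z - 1) * ((z - amax - smax) * s) by apply: mulr_ge0; nra.
  have h4 : 0 < (z - amax) * s by apply: mulr_gt0; lra.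
  nra.
have := mulr_gt0 c_gt0 key.
have e1 : c * (z - amax) * d = d by rewrite cE mul1r.
have e2 : c * (z - amax) * (z * s) = z * s by rewrite cE mul1r.
lra.
Qed.

End ZForm.

Lemma mulD_lt_of_lt_div (R : realFieldType) (a r d z : R) :
  1 <= a -> 0 <= r -> 0 <= d -> 0 < z -> z < r / (a + r + d) -> z * (a + r) < r.
Proof.
move=> a_ge1 r_ge0 d_ge0 z_gt0; rewrite ltr_pdivlMr; last lra.
by have := mulr_ge0 (ltW z_gt0) d_ge0; lra.
Qed.

Lemma spd_unitmx (R : realType) k (M : 'M[R]_k) : spd M -> M \in unitmx.
Proof.
case=> _ Mpd; rewrite unitmxE unitfE; apply/negP => /det0P[v vn0 vM].
by have := Mpd v vn0; rewrite vM mul0mx mxE ltxx.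
Qed.

Section Preconditioning.
Variables (R : realType) (n m : nat).
Variables (A : 'M[R]_n) (B : 'M[R]_(m, n)) (D : 'M[R]_m).
Variables (Ahat Ahi : 'M[R]_n) (Shat Shi : 'M[R]_m).
Hypotheses (A_sym : A^T = A) (D_sym : D^T = D) (D_psd : forall x, 0 <= qform D x).
Hypothesis B_free : row_free B.
Hypotheses (Ahi_sym : Ahi^T = Ahi) (Ahi_unit : Ahi \in unitmx).
Hypothesis AhiE : Ahi *m Ahi = invmx Ahat.
Hypotheses (Shi_sym : Shi^T = Shi) (Shi_unit : Shi \in unitmx).
Hypothesis ShiE : Shi *m Shi = invmx Shat.

Let Abar := Ahi *m A *m Ahi.
Let Dbar := Shi *m D *m Shi.
Let Rm := Shi *m B *m Ahi.
Let Stil := D + B *m invmx Ahat *m B^T.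
Let Sbar := Dbar + Rm *m Rm^T.

Lemma Abar_sym : Abar^T = Abar.
Proof. by rewrite /Abar !trmx_mul Ahi_sym A_sym mulmxA. Qed.

Lemma Abar_spec gmin gmax :
  is_lambda_min (invmx Ahat *m A) gmin -> is_lambda_max (invmx Ahat *m A) gmax ->
  forall mu, eigenvalue Abar mu -> gmin <= mu <= gmax.
Proof.
move=> [_ gmin_le] [_ le_gmax] mu; rewrite eigenvalue_sandwich // AhiE => Amu.
by rewrite gmin_le ?le_gmax.
Qed.

Lemma Dbar_psd x : 0 <= qform Dbar x.
Proof. by rewrite /Dbar -[Shi in _ *m Shi]Shi_sym qform_mul_tr. Qed.

Lemma lambda_max_D_ge0 g : is_lambda_max (invmx Shat *m D) g -> 0 <= g.
Proof.
case=> + _; rewrite -ShiE -eigenvalue_sandwich //.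
exact: psd_eigenvalue_ge0 Dbar_psd.
Qed.

Lemma Sbar_sym : Sbar^T = Sbar.
Proof.
have Dbar_sym : Dbar^T = Dbar by rewrite /Dbar !trmx_mul Shi_sym D_sym mulmxA.
by rewrite /Sbar linearD /= Dbar_sym trmx_mul trmxK.
Qed.

Lemma qform_Sbar x : qform Sbar x = qform Dbar x + sqnorm (x *m Rm).
Proof. by rewrite qformD qform_mul_trmx. Qed.

Lemma eigenvalue_Sbar a : eigenvalue Sbar a = eigenvalue (invmx Shat *m Stil) a.
Proof.
have -> : Sbar = Shi *m Stil *m Shi.
  rewrite /Sbar /Dbar /Rm /Stil mulmxDr mulmxDl; congr (_ + _).
  by rewrite !trmx_mul Ahi_sym Shi_sym !mulmxA -(mulmxA _ Ahi Ahi) AhiE.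
by rewrite eigenvalue_sandwich // ShiE.
Qed.

Lemma Sbar_ub g : is_lambda_max (invmx Shat *m Stil) g ->
  forall x, qform Dbar x + sqnorm (x *m Rm) <= g * sqnorm x.
Proof.
case=> _ le_g x; rewrite -qform_Sbar; apply: symmx_qform_le Sbar_sym _ x => a.
by rewrite eigenvalue_Sbar; apply: le_g.
Qed.

Lemma lambda_max_Stil_gt0 g : is_lambda_max (invmx Shat *m Stil) g -> 0 < g.
Proof.
case=> + _; rewrite -eigenvalue_Sbar; apply: posdef_eigenvalue_gt0 => x xn0.
rewrite qform_Sbar ltr_wpDl ?Dbar_psd ?sqnorm_gt0 //.
by rewrite /Rm !mulmxA !mulmx_free_eq0 ?row_free_unit.
Qed.

End Preconditioning.

Theorem lemma3 (R : realType) (n m : nat)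
  (A : 'M[R]_n) (B : 'M[R]_(m, n)) (D : 'M[R]_m)
  (Ahat : 'M[R]_n) (Shat : 'M[R]_m)
  (Ahi : 'M[R]_n) (Shi : 'M[R]_m)
  (gAmin gAmax gSmax gDmax gRmin zeta : R) :
  (m <= n)%N ->
  spd A -> \rank B = m -> spsd D -> spd Ahat -> spd Shat ->
  (* Ahi = Ahat^{-1/2}, Shi = Shat^{-1/2} (the SPD square roots of the inverses) *)
  spd Ahi -> Ahi *m Ahi = invmx Ahat ->
  spd Shi -> Shi *m Shi = invmx Shat ->
  let Abar := Ahi *m A *m Ahi in
  let Dbar := Shi *m D *m Shi in
  let Rm := Shi *m B *m Ahi in
  let Stil := D + B *m invmx Ahat *m B^T in
  is_lambda_min (invmx Ahat *m A) gAmin ->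
  is_lambda_max (invmx Ahat *m A) gAmax ->
  is_lambda_max (invmx Shat *m Stil) gSmax ->
  is_lambda_max (invmx Shat *m D) gDmax ->
  is_lambda_min (Rm *m Rm^T) gRmin ->
  gAmin <= 1 <= gAmax ->
  ((0 < zeta /\ zeta < gAmin /\ zeta < gRmin / (gAmax + gRmin + gDmax))
   \/ gAmax + gSmax <= zeta) ->
  let Z := (1 - zeta) *: (Rm *m invmx (zeta%:M - Abar) *m Rm^T) - Dbar + zeta%:M in
  (forall a, eigenvalue Z a -> 0 < a) \/ (forall a, eigenvalue Z a -> a < 0).
Proof.
move=> _ [A_sym _] rkB [D_sym D_psd] _ _ Ahi_spd AhiE Shi_spd ShiE.
move=> Abar Dbar Rm Stil hAmin hAmax hSmax hDmax hRmin gA1 hz Z.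
have B_free : row_free B by rewrite /row_free rkB.
have Ahi_unit := spd_unitmx Ahi_spd; have Shi_unit := spd_unitmx Shi_spd.
case: Ahi_spd Shi_spd => Ahi_sym _ [Shi_sym _].
have Ab_sym := Abar_sym A_sym Ahi_sym.
have Ab_spec := Abar_spec Ahi_unit AhiE hAmin hAmax.
have Db_psd := Dbar_psd D_psd Shi_sym.
case: hz => [[z_gt0 [z_lt z_small]] | z_ge]; [right | left].
- move=> a; apply: negdef_eigenvalue_lt0; apply: (Z_negdef Ab_sym Ab_spec Db_psd gA1).
  + by rewrite z_gt0.
  + have gD_ge0 := lambda_max_D_ge0 D_psd Shi_sym Shi_unit ShiE hDmax.
    have gR_ge0 := psd_eigenvalue_ge0 (qform_gram_ge0 Rm) hRmin.1.
    by case/andP: gA1 => _ gA_ge1; apply: mulD_lt_of_lt_div z_small.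
  + exact: sqnorm_mul_ge hRmin.2.
- move=> a; apply: posdef_eigenvalue_gt0; apply: (Z_posdef Ab_sym Ab_spec Db_psd _ _ z_ge).
  + by case/andP: gA1.
  + by apply: (lambda_max_Stil_gt0 (Ahi := Ahi) (Shi := Shi)) hSmax.
  + by apply: Sbar_ub hSmax.
Qed.
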